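(* Let $I$ be a non-degenerate interval and $f:I\to\mathbb{R}$ continuous, and let $D(f)$ be the set of points where $f$ has a derivative (finite or infinite). Then the set $\{(x,f(x)):x\in D(f)\}$ can be covered by countably many symmetrically $1$-monotone sets.
   Context: A metric space $(X,d)$ is symmetrically $1$-monotone if there is a linear order $<$ on $X$ such that $\max(d(x,y),d(y,z))\le d(x,z)$ whenever $x<y<z$. Subsets of $\mathbb{R}^2$ carry the Euclidean metric. *)

From Stdlib Require Import Reals.
From Coquelicot Require Import Coquelicot.
Open Scope R_scope.

Definition is_interval (I : R -> Prop) : Prop :=
  forall a b c, I a -> I c -> a <= b -> b <= c -> I b.

Definition nondegenerate (I : R -> Prop) : Prop :=
  exists a b, a < b /\ I a /\ I b.

Definition has_derivative_ext (I : R -> Prop) (f : R -> R) (x : R) : Prop :=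
  I x /\ exists l : Rbar,
    filterlim (fun y => (f y - f x) / (y - x))
      (within (fun y => I y /\ y <> x) (locally x)) (Rbar_locally l).

Definition dist2 (p q : R * R) : R :=
  sqrt ((fst p - fst q) ^ 2 + (snd p - snd q) ^ 2).

Definition strict_linear_order_on (S : R * R -> Prop) (lt : R * R -> R * R -> Prop) : Prop :=
  (forall x, S x -> ~ lt x x) /\
  (forall x y z, S x -> S y -> S z -> lt x y -> lt y z -> lt x z) /\
  (forall x y, S x -> S y -> x <> y -> lt x y \/ lt y x).

Definition sym_1_monotone (S : R * R -> Prop) : Prop :=
  exists lt, strict_linear_order_on S lt /\
    forall x y z, S x -> S y -> S z -> lt x y -> lt y z ->
      Rmax (dist2 x y) (dist2 y z) <= dist2 x z.

(** Near a point where f has a (possibly infinite) derivative, the difference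
    quotients eventually lie in one of the three slope cones [0, +oo), (-oo, 0]
    and [-1, 1]; any two slopes s, t from one cone satisfy 1 + s t >= 0.  For
    graph points x < y < z whose chords all have slopes in a common cone, this
    says that the vectors from (x, f x) to (y, f y) and from (y, f y) to
    (z, f z) make a non-obtuse angle, so the chord from x to z is the longest:
    ordering by abscissa makes such a set symmetrically 1-monotone.  Grouping
    the points of D(f) by cone, by a scale 1/(n+1) below which the cone is
    reached, and by a window of that width gives countably many such sets. *)

From Stdlib Require Import Reals Lra Lia Cantor ZArith.
From Coquelicot Require Import Coquelicot.
Open Scope R_scope.

Definition slope (f : R -> R) (x y : R) : R := (f y - f x) / (y - x).

Definition slope_cone (k : nat) (s : R) : Prop :=
  match k with 0%nat => 0 <= s | 1%nat => s <= 0 | _ => Rabs s <= 1 end.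

Lemma slope_cone_mul_ge k s t :
  slope_cone k s -> slope_cone k t -> 0 <= 1 + s * t.
Proof.
  destruct k as [|[|k]]; simpl; intros Hs Ht; [nra | nra |].
  revert Hs Ht; unfold Rabs.
  destruct (Rcase_abs s), (Rcase_abs t); intros; nra.
Qed.

Lemma Rmax_dist2_le a b c :
  0 <= (fst b - fst a) * (fst c - fst b) + (snd b - snd a) * (snd c - snd b) ->
  Rmax (dist2 a b) (dist2 b c) <= dist2 a c.
Proof.
  destruct a as [a1 a2], b as [b1 b2], c as [c1 c2]; simpl; intros Hacute.
  unfold dist2; simpl.
  assert (Hsum : (a1 - c1) ^ 2 + (a2 - c2) ^ 2 =
    (a1 - b1) ^ 2 + (a2 - b2) ^ 2 + ((b1 - c1) ^ 2 + (b2 - c2) ^ 2)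
    + 2 * ((b1 - a1) * (c1 - b1) + (b2 - a2) * (c2 - b2))) by ring.
  pose proof (pow2_ge_0 (a1 - b1)); pose proof (pow2_ge_0 (a2 - b2)).
  pose proof (pow2_ge_0 (b1 - c1)); pose proof (pow2_ge_0 (b2 - c2)).
  apply Rmax_lub; apply sqrt_le_1_alt; lra.
Qed.

Lemma graph_chords_acute f k x y z :
  x < y -> y < z -> slope_cone k (slope f x y) -> slope_cone k (slope f y z) ->
  0 <= (y - x) * (z - y) + (f y - f x) * (f z - f y).
Proof.
  intros Hxy Hyz Hs Ht.
  assert (Ex : f y - f x = slope f x y * (y - x)) by (unfold slope; field; lra).
  assert (Ey : f z - f y = slope f y z * (z - y)) by (unfold slope; field; lra).
  rewrite Ex, Ey.
  replace ((y - x) * (z - y) + slope f x y * (y - x) * (slope f y z * (z - y)))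
    with ((y - x) * (z - y) * (1 + slope f x y * slope f y z)) by ring.
  apply Rmult_le_pos; [nra | exact (slope_cone_mul_ge _ _ _ Hs Ht)].
Qed.

Lemma sym_1_monotone_by_abscissa (S : R * R -> Prop) :
  (forall a b, S a -> S b -> fst a = fst b -> a = b) ->
  (forall a b c, S a -> S b -> S c -> fst a < fst b -> fst b < fst c ->
     0 <= (fst b - fst a) * (fst c - fst b) + (snd b - snd a) * (snd c - snd b)) ->
  sym_1_monotone S.
Proof.
  intros Hinj Hacute.
  exists (fun a b => fst a < fst b); split; [split; [|split]|].
  - intros a _; lra.
  - intros a b c _ _ _; lra.
  - intros a b Sa Sb Hne.
    destruct (Rtotal_order (fst a) (fst b)) as [H | [H | H]]; [now left | | now right].
    now contradiction (Hinj a b Sa Sb H).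
  - intros a b c Sa Sb Sc Hab Hbc; apply Rmax_dist2_le, Hacute; assumption.
Qed.

Definition mesh (n : nat) : R := / INR (S n).

Lemma mesh_pos n : 0 < mesh n.
Proof. apply Rinv_0_lt_compat, lt_0_INR; lia. Qed.

Definition graph_piece (I : R -> Prop) (f : R -> R) (k n : nat) (m : Z)
    (pt : R * R) : Prop :=
  exists x, pt = (x, f x) /\ I x /\
    IZR m * mesh n <= x <= (IZR m + 1) * mesh n /\
    forall y, I y -> y <> x -> Rabs (y - x) <= mesh n -> slope_cone k (slope f x y).

Lemma graph_piece_sym_1_monotone I f k n m : sym_1_monotone (graph_piece I f k n m).
Proof.
  apply sym_1_monotone_by_abscissa.
  - now intros a b [x [-> _]] [y [-> _]]; simpl; intros ->.
  - intros a b c [x [-> [_ [Wx Cx]]]] [y [-> [Iy [Wy Cy]]]] [z [-> [Iz [Wz _]]]];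
      simpl; intros Hxy Hyz.
    assert (Hnear : forall u v, IZR m * mesh n <= u <= (IZR m + 1) * mesh n ->
              IZR m * mesh n <= v <= (IZR m + 1) * mesh n -> Rabs (v - u) <= mesh n).
    { intros u v Hu Hv; apply Rabs_le; lra. }
    apply graph_chords_acute with (k := k); [lra | lra | |].
    + apply Cx; [exact Iy | lra | exact (Hnear _ _ Wx Wy)].
    + apply Cy; [exact Iz | lra | exact (Hnear _ _ Wy Wz)].
Qed.

Lemma Rbar_locally_slope_cone (l : Rbar) : exists k, Rbar_locally l (slope_cone k).
Proof.
  destruct l as [r | |].
  - destruct (Rtotal_order r 0) as [Hr | [-> | Hr]].
    + exists 1%nat, (mkposreal (- r) ltac:(lra)); intros v Hv.
      change (Rabs (v - r) < - r) in Hv; apply Rabs_def2 in Hv; simpl; lra.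
    + exists 2%nat, (mkposreal 1 ltac:(lra)); intros v Hv.
      change (Rabs (v - 0) < 1) in Hv; rewrite Rminus_0_r in Hv; simpl; lra.
    + exists 0%nat, (mkposreal r ltac:(lra)); intros v Hv.
      change (Rabs (v - r) < r) in Hv; apply Rabs_def2 in Hv; simpl; lra.
  - exists 0%nat, 0; simpl; intros; lra.
  - exists 1%nat, 0; simpl; intros; lra.
Qed.

Lemma has_derivative_ext_slope_cone I f x :
  has_derivative_ext I f x ->
  exists k (eps : posreal), forall y, I y -> y <> x -> Rabs (y - x) < eps ->
    slope_cone k (slope f x y).
Proof.
  intros [_ [l Hl]].
  destruct (Rbar_locally_slope_cone l) as [k Hk].
  destruct (Hl _ Hk) as [eps Heps].
  exists k, eps; intros y Iy Hyx Hy.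
  exact (Heps y Hy (conj Iy Hyx)).
Qed.

Lemma has_derivative_ext_graph_piece I f x :
  has_derivative_ext I f x -> exists k n m, graph_piece I f k n m (x, f x).
Proof.
  intros Hder.
  destruct (has_derivative_ext_slope_cone I f x Hder) as [k [eps Hcone]].
  destruct (archimed_cor1 eps (cond_pos eps)) as [[| n] [Hn Hpos0]]; [lia |].
  assert (Hmesh : mesh n < eps) by exact Hn.
  pose proof (mesh_pos n) as Hpos.
  destruct (base_Int_part (x / mesh n)) as [Hlow Hhigh].
  exists k, n, (Int_part (x / mesh n)), x.
  split; [reflexivity | split; [exact (proj1 Hder) | split]].
  - set (q := x / mesh n) in *.
    assert (Hx : x = q * mesh n) by (unfold q; field; lra).
    rewrite Hx; split; apply Rmult_le_compat_r; lra.
  - intros y Iy Hyx Hy; apply Hcone; [exact Iy | exact Hyx | lra].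
Qed.

Definition Z_of_nat_pair (pq : nat * nat) : Z := (Z.of_nat (fst pq) - Z.of_nat (snd pq))%Z.

Lemma Z_of_nat_pair_surj (m : Z) : exists pq, Z_of_nat_pair pq = m.
Proof.
  destruct (Z_le_gt_dec 0 m).
  - exists (Z.to_nat m, 0%nat); unfold Z_of_nat_pair; simpl; lia.
  - exists (0%nat, Z.to_nat (- m)); unfold Z_of_nat_pair; simpl; lia.
Qed.

Definition graph_piece_enum (I : R -> Prop) (f : R -> R) (i : nat) : R * R -> Prop :=
  let (k, r) := Cantor.of_nat i in
  let (n, pq) := Cantor.of_nat r in
  graph_piece I f k n (Z_of_nat_pair (Cantor.of_nat pq)).

Lemma graph_piece_enum_surj I f k n m :
  exists i, graph_piece_enum I f i = graph_piece I f k n m.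
Proof.
  destruct (Z_of_nat_pair_surj m) as [pq <-].
  exists (Cantor.to_nat (k, Cantor.to_nat (n, Cantor.to_nat pq))).
  unfold graph_piece_enum; now rewrite !cancel_of_to.
Qed.

Theorem corollary6p4 (I : R -> Prop) (f : R -> R) :
  is_interval I -> nondegenerate I -> continuous_on I f ->
  exists S : nat -> (R * R -> Prop),
    (forall n, sym_1_monotone (S n)) /\
    (forall x, has_derivative_ext I f x -> exists n, S n (x, f x)).
Proof.
  intros _ _ _.
  exists (graph_piece_enum I f); split.
  - intros i; unfold graph_piece_enum.
    destruct (Cantor.of_nat i) as [k r], (Cantor.of_nat r) as [n pq].
    apply graph_piece_sym_1_monotone.
  - intros x Hder.
    destruct (has_derivative_ext_graph_piece I f x Hder) as [k [n [m Hpiece]]].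
    destruct (graph_piece_enum_surj I f k n m) as [i Hi].
    exists i; now rewrite Hi.
Qed.
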